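(* Let $\Gamma\subset\mathrm{SL}_2(\mathbb{R})$ be a Fuchsian group and $k$ an integer. Let $\mathfrak{o}_k=\mathcal{O}\partial_\tau\oplus\mathcal{O}$ be the space of first-order differential operators $f(\tau)\partial_\tau+g(\tau)$ with $f,g$ holomorphic on the upper half-plane $\mathbb{H}$, equipped with the weight-$k$ action $\|_k$ of $\Gamma$. Then the vector subspace $$\mathfrak{d}_k:=\{\,2p(\tau)\partial_\tau+k\,p'(\tau)\;:\;p\in\mathbb{C}[\tau],\ \deg p\le 2\,\}$$ of $\mathfrak{o}_k$ is a $\Gamma$-submodule, i.e. $a\|_k\gamma\in\mathfrak{d}_k$ for all $a\in\mathfrak{d}_k$ and $\gamma\in\Gamma$.
   Context: $\Gamma$ acts on $\mathbb{H}$ by $\gamma\tau=\frac{a\tau+b}{c\tau+d}$ for $\gamma=\begin{psmatrix}a&b\\c&d\end{psmatrix}$, and $j_\gamma(\tau)=c\tau+d$. $\mathcal{O}$ denotes the holomorphic functions on $\mathbb{H}$ and $\mathcal{O}[\partial_\tau]$ the finite-order linear differential operators with coefficients in $\mathcal{O}$. The weight-$k$ action on $\mathcal{O}[\partial_\tau]$ is $(a\|_k\gamma)(\tau,\partial_\tau)=j_\gamma(\tau)^{-k}\,a(\gamma\tau,\partial_{\gamma\tau})\,j_\gamma(\tau)^{k}$, where $j_\gamma^{\pm k}$ act as multiplication operators and $\partial_{\gamma\tau}=(c\tau+d)^2\partial_\tau$. *)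

From Stdlib Require Import Reals ZArith ClassicalEpsilon.
From Coquelicot Require Import Coquelicot.
Open Scope R_scope.

Record mat2 := Mat2 { ma : R; mb : R; mc : R; md : R }.

Definition mat_id : mat2 := Mat2 1 0 0 1.
Definition mat_mul (g h : mat2) : mat2 :=
  Mat2 (ma g * ma h + mb g * mc h) (ma g * mb h + mb g * md h)
       (mc g * ma h + md g * mc h) (mc g * mb h + md g * md h).
Definition mat_inv_SL2 (g : mat2) : mat2 := Mat2 (md g) (- mb g) (- mc g) (ma g).

Definition is_SL2 (g : mat2) : Prop := ma g * md g - mb g * mc g = 1.

Definition subgroup_SL2 (Gamma : mat2 -> Prop) : Prop :=
  (forall g, Gamma g -> is_SL2 g) /\
  Gamma mat_id /\
  (forall g h, Gamma g -> Gamma h -> Gamma (mat_mul g h)) /\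
  (forall g, Gamma g -> Gamma (mat_inv_SL2 g)).

(** discreteness in the topology of SL_2(R) ⊂ R^4: every point is isolated *)
Definition discrete_set (Gamma : mat2 -> Prop) : Prop :=
  forall g, Gamma g -> exists eps, 0 < eps /\
    forall h, Gamma h ->
      Rabs (ma h - ma g) < eps -> Rabs (mb h - mb g) < eps ->
      Rabs (mc h - mc g) < eps -> Rabs (md h - md g) < eps -> h = g.

Definition fuchsian (Gamma : mat2 -> Prop) : Prop :=
  subgroup_SL2 Gamma /\ discrete_set Gamma.

Definition inH (z : C) : Prop := 0 < Im z.

(** complex derivative (meaningful where f is complex differentiable) *)
Definition cderiv (f : C -> C) (z : C) : C :=
  epsilon (inhabits (RtoC 0))
    (fun l => @is_derive C_AbsRing C_NormedModule f z l).

Definition holo_H (f : C -> C) : Prop :=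
  forall z, inH z -> exists l, @is_derive C_AbsRing C_NormedModule f z l.

Definition Czpow (z : C) (k : Z) : C :=
  match k with
  | Z0 => RtoC 1
  | Zpos n => Cpow z (Pos.to_nat n)
  | Zneg n => Cinv (Cpow z (Pos.to_nat n))
  end.

Definition mobius (g : mat2) (t : C) : C :=
  Cdiv (Cplus (Cmult (RtoC (ma g)) t) (RtoC (mb g)))
       (Cplus (Cmult (RtoC (mc g)) t) (RtoC (md g))).
Definition jfac (g : mat2) (t : C) : C :=
  Cplus (Cmult (RtoC (mc g)) t) (RtoC (md g)).

(** A first-order operator f(tau) d_tau + g(tau), given by its coefficients,
    applied to a function h *)
Definition op_apply (f g : C -> C) (h : C -> C) (t : C) : C :=
  Cplus (Cmult (f t) (cderiv h t)) (Cmult (g t) (h t)).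

(** Weight-k action: (a ||_k gamma) = j^{-k} a(gamma tau, d_{gamma tau}) j^k,
    with d_{gamma tau} = j(tau)^2 d_tau; applied to a function h *)
Definition slash_apply (k : Z) (gam : mat2) (f g : C -> C) (h : C -> C) (t : C) : C :=
  Cmult (Czpow (jfac gam t) (- k))
    (Cplus
      (Cmult (Cmult (f (mobius gam t)) (Cpow (jfac gam t) 2))
             (cderiv (fun s => Cmult (Czpow (jfac gam s) k) (h s)) t))
      (Cmult (g (mobius gam t)) (Cmult (Czpow (jfac gam t) k) (h t)))).

Definition poly2 (p0 p1 p2 : C) (t : C) : C :=
  Cplus p0 (Cplus (Cmult p1 t) (Cmult p2 (Cmult t t))).
Definition poly2' (p0 p1 p2 : C) (t : C) : C :=
  Cplus p1 (Cmult (RtoC 2) (Cmult p2 t)).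

Definition dk_f (p0 p1 p2 : C) (t : C) : C := Cmult (RtoC 2) (poly2 p0 p1 p2 t).
Definition dk_g (k : Z) (p0 p1 p2 : C) (t : C) : C :=
  Cmult (RtoC (IZR k)) (poly2' p0 p1 p2 t).

(* The weight-k slash of any first-order operator f d + g is again first order:
   since d (j^k h) = k c j^(k-1) h + j^k h', it equals
   j^2 (f o gamma) d + (g o gamma + k c j (f o gamma)).
   For f = 2p, g = kp' this is 2q d + kq' with q = j^2 (p o gamma): indeed
   q' = 2cj (p o gamma) + (p' o gamma) because gamma' = 1/j^2 for det gamma = 1,
   and q is again a polynomial of degree at most 2.  Only gamma in SL_2(R) is
   used. *)

From Stdlib Require Import Reals ZArith Lra ClassicalEpsilon.
From Coquelicot Require Import Coquelicot.
Open Scope C_scope.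

(* Coquelicot's generic product and chain rules use [AbsRing_NormedModule C_AbsRing],
   which is not convertible to [C_NormedModule]. *)
Lemma is_derive_C_AbsRing (f : C -> C) (z l : C) :
  is_derive f z l <-> @is_derive C_AbsRing (AbsRing_NormedModule C_AbsRing) f z l.
Proof. split; intros [[Hadd Hscal Hbnd] Hdiff]; repeat split; assumption. Qed.

Lemma cderiv_unique (f : C -> C) (z l : C) : is_derive f z l -> cderiv f z = l.
Proof.
  intros Hl. unfold cderiv.
  pose proof (epsilon_spec (inhabits (RtoC 0)) (fun l => is_derive f z l)
                (ex_intro _ l Hl)) as Hspec.
  now rewrite <- (is_C_derive_unique _ _ _ Hl), <- (is_C_derive_unique _ _ _ Hspec).
Qed.

Lemma is_derive_Cmult (f g : C -> C) (z df dg : C) :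
  is_derive f z df -> is_derive g z dg ->
  is_derive (fun s => f s * g s) z (df * g z + f z * dg).
Proof.
  rewrite !is_derive_C_AbsRing. intros Hf Hg.
  exact (is_derive_mult f g z df dg Hf Hg Cmult_comm).
Qed.

Lemma is_derive_Cinv (w : C) : w <> 0 -> is_derive Cinv w (- / (w * w)).
Proof.
  intros Hw. split; [apply is_linear_scal_l|].
  intros x Hx.
  apply (@is_filter_lim_locally_unique _ (AbsRing_NormedModule C_AbsRing)) in Hx.
  subst x. intros eps.
  pose proof (cond_pos eps) as Heps.
  pose proof (proj1 (Cmod_gt_0 w) Hw) as Hm.
  set (m := Cmod w) in *.
  assert (Hdelta : (0 < Rmin (m / 2) (eps * (m * m * m) / 2))%R).
  { apply Rmin_pos; [lra|]. apply Rmult_lt_0_compat; [|lra].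
    repeat apply Rmult_lt_0_compat; lra. }
  exists (mkposreal _ Hdelta). intros y Hy. change C in y.
  change (Cmod (y - w) < Rmin (m / 2) (eps * (m * m * m) / 2))%R in Hy.
  change (Cmod (/ y - / w - (y - w) * (- / (w * w))) <= eps * Cmod (y - w))%R.
  set (u := Cmod (y - w)) in *.
  assert (Hu : (0 <= u)%R) by apply Cmod_ge_0.
  assert (Hy_near : (u < m / 2)%R) by (eapply Rlt_le_trans; [apply Hy|apply Rmin_l]).
  assert (Hu_small : (u < eps * (m * m * m) / 2)%R)
    by (eapply Rlt_le_trans; [apply Hy|apply Rmin_r]).
  assert (Hn : (m / 2 <= Cmod y)%R).
  { pose proof (Cmod_triangle y (w - y)) as Htri.
    replace (y + (w - y)) with w in Htri by ring.
    replace (w - y) with (- (y - w)) in Htri by ring.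
    rewrite Cmod_opp in Htri. fold m u in Htri. lra. }
  assert (Hy0 : y <> 0) by (apply Cmod_gt_0; lra).
  replace (/ y - / w - (y - w) * (- / (w * w)))
    with ((y - w) * (y - w) / (y * w * w)) by (field; auto).
  rewrite Cmod_div by (repeat apply Cmult_neq_0; auto).
  rewrite !Cmod_mult. fold m u. set (n := Cmod y) in *.
  assert (Hden : (0 < n * m * m)%R) by (repeat apply Rmult_lt_0_compat; lra).
  apply (Rmult_le_reg_r (n * m * m)); [exact Hden|].
  unfold Rdiv. rewrite Rmult_assoc, Rinv_l, Rmult_1_r by lra.
  assert (u * u <= u * (eps * (m * m * m) / 2))%R by (apply Rmult_le_compat_l; lra).
  assert (m * m * m / 2 <= n * m * m)%R by nra.
  nra.
Qed.

Lemma is_derive_Cpow (f : C -> C) (n : nat) (z l : C) :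
  is_derive f z l -> is_derive (fun s => f s ^ S n) z (INR (S n) * l * f z ^ n).
Proof.
  intros Hf. induction n as [|n IH].
  - replace (INR 1 * l * f z ^ 0) with (l * 1 + f z * 0) by (simpl; ring).
    exact (is_derive_Cmult f (fun _ => 1) z l 0 Hf
             (@is_derive_const C_AbsRing C_NormedModule (RtoC 1) z)).
  - replace (INR (S (S n)) * l * f z ^ S n)
      with (l * f z ^ S n + f z * (INR (S n) * l * f z ^ n))
      by (rewrite (S_INR (S n)), RtoC_plus; simpl; ring).
    exact (is_derive_Cmult f (fun s => f s ^ S n) z _ _ Hf IH).
Qed.

Lemma is_derive_Czpow (f : C -> C) (k : Z) (z l : C) :
  is_derive f z l -> f z <> 0 ->
  is_derive (fun s => Czpow (f s) k) z (IZR k * l * Czpow (f z) k / f z).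
Proof.
  intros Hf Hz. destruct k as [|p|p]; simpl Czpow.
  - replace (IZR 0 * l * 1 / f z) with (RtoC 0) by (field; exact Hz).
    exact (@is_derive_const C_AbsRing C_NormedModule (RtoC 1) z).
  - destruct (Pos2Nat.is_succ p) as [n Hn]. rewrite Hn.
    replace (IZR (Z.pos p) * l * f z ^ S n / f z) with (INR (S n) * l * f z ^ n)
      by (rewrite <- positive_nat_Z, <- INR_IZR_INZ, Hn; simpl Cpow; field; exact Hz).
    exact (is_derive_Cpow f n z l Hf).
  - destruct (Pos2Nat.is_succ p) as [n Hn]. rewrite Hn.
    pose proof (Cpow_nz (f z) (S n) Hz) as Hpow.
    replace (IZR (Z.neg p) * l * / f z ^ S n / f z)
      with ((INR (S n) * l * f z ^ n) * (- / (f z ^ S n * f z ^ S n)))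
      by (rewrite <- Pos2Z.opp_pos, opp_IZR, <- positive_nat_Z, <- INR_IZR_INZ, Hn,
            RtoC_opp; simpl Cpow; field; split; [apply Cpow_nz, Hz | exact Hz]).
    apply (is_derive_comp Cinv (fun s => f s ^ S n)).
    + exact (is_derive_Cinv _ Hpow).
    + apply is_derive_C_AbsRing, is_derive_Cpow, Hf.
Qed.

Lemma Czpow_neq0 (z : C) (k : Z) : z <> 0 -> Czpow z k <> 0.
Proof.
  intros Hz. pose proof (Cpow_nz z) as Hpow.
  destruct k as [|p|p]; simpl.
  - exact C1_nz.
  - apply Hpow, Hz.
  - intros H0. apply C1_nz.
    rewrite <- (Cinv_l _ (Hpow (Pos.to_nat p) Hz)), H0. ring.
Qed.

Lemma Czpow_opp (z : C) (k : Z) : z <> 0 -> Czpow z (- k) = / Czpow z k.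
Proof.
  intros Hz. destruct k as [|p|p]; simpl; [field | reflexivity | field].
  apply Cpow_nz, Hz.
Qed.

Lemma is_derive_jfac (gam : mat2) (t : C) : is_derive (jfac gam) t (RtoC (mc gam)).
Proof.
  replace (RtoC (mc gam)) with ((0 * t + mc gam * 1) + 0) by ring.
  unfold jfac.
  apply (@is_derive_plus C_AbsRing C_NormedModule
           (fun s => mc gam * s) (fun _ => RtoC (md gam))).
  - apply (is_derive_Cmult (fun _ => RtoC (mc gam)) (fun s => s)).
    + exact (@is_derive_const C_AbsRing C_NormedModule (RtoC (mc gam)) t).
    + apply is_derive_C_AbsRing, (@is_derive_id C_AbsRing).
  - exact (@is_derive_const C_AbsRing C_NormedModule (RtoC (md gam)) t).
Qed.

Lemma jfac_neq0 (gam : mat2) (t : C) : is_SL2 gam -> inH t -> jfac gam t <> 0.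
Proof.
  destruct t as [x y]. unfold is_SL2, inH, jfac. simpl. intros Hdet Hy Hj.
  injection Hj. simpl. intros Him Hre.
  assert (Hc : mc gam = 0%R) by nra.
  rewrite Hc in Hre, Hdet. nra.
Qed.

Lemma slash_apply_first_order (k : Z) (gam : mat2) (f g h : C -> C) (t l : C) :
  jfac gam t <> 0 -> is_derive h t l ->
  slash_apply k gam f g h t =
  op_apply (fun s => jfac gam s ^ 2 * f (mobius gam s))
           (fun s => g (mobius gam s) + IZR k * mc gam * jfac gam s * f (mobius gam s))
           h t.
Proof.
  intros Hj Hh. unfold slash_apply, op_apply.
  rewrite (cderiv_unique h t l Hh).
  pose proof (is_derive_Czpow (jfac gam) k t _ (is_derive_jfac gam t) Hj) as Hjk.
  rewrite (cderiv_unique (fun s => Czpow (jfac gam s) k * h s) t _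
             (is_derive_Cmult _ h t _ l Hjk Hh)).
  rewrite (Czpow_opp _ k Hj).
  field. split; try apply Czpow_neq0; exact Hj.
Qed.

(* q(t) = j(t)^2 p(gamma t) = p0 (ct+d)^2 + p1 (at+b)(ct+d) + p2 (at+b)^2 *)
Definition poly2_slash0 (gam : mat2) (p0 p1 p2 : C) : C :=
  p0 * (md gam * md gam) + p1 * (mb gam * md gam) + p2 * (mb gam * mb gam).
Definition poly2_slash1 (gam : mat2) (p0 p1 p2 : C) : C :=
  2 * p0 * mc gam * md gam + p1 * (ma gam * md gam + mb gam * mc gam)
  + 2 * p2 * ma gam * mb gam.
Definition poly2_slash2 (gam : mat2) (p0 p1 p2 : C) : C :=
  p0 * (mc gam * mc gam) + p1 * (ma gam * mc gam) + p2 * (ma gam * ma gam).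

Lemma poly2_slash (gam : mat2) (p0 p1 p2 t : C) : jfac gam t <> 0 ->
  jfac gam t ^ 2 * poly2 p0 p1 p2 (mobius gam t) =
  poly2 (poly2_slash0 gam p0 p1 p2) (poly2_slash1 gam p0 p1 p2)
        (poly2_slash2 gam p0 p1 p2) t.
Proof.
  unfold jfac, poly2, mobius, poly2_slash0, poly2_slash1, poly2_slash2.
  intros Hj. field. exact Hj.
Qed.

Lemma SL2_jfac_det (gam : mat2) (t : C) : is_SL2 gam ->
  ma gam * jfac gam t - mc gam * (ma gam * t + mb gam) = 1.
Proof.
  unfold is_SL2, jfac. intros Hdet.
  rewrite <- Hdet, RtoC_minus, !RtoC_mult. ring.
Qed.

Lemma poly2'_slash (gam : mat2) (p0 p1 p2 t : C) : is_SL2 gam -> jfac gam t <> 0 ->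
  poly2' p0 p1 p2 (mobius gam t)
  + 2 * mc gam * jfac gam t * poly2 p0 p1 p2 (mobius gam t) =
  poly2' (poly2_slash0 gam p0 p1 p2) (poly2_slash1 gam p0 p1 p2)
         (poly2_slash2 gam p0 p1 p2) t.
Proof.
  intros Hdet Hj.
  (* q' = 2cj (p o gamma) + j^2 gamma' (p' o gamma), and j^2 gamma' = det gamma = 1 *)
  rewrite <- (Cmult_1_r (poly2' p0 p1 p2 (mobius gam t))), <- (SL2_jfac_det gam t Hdet).
  unfold jfac, poly2, poly2', mobius, poly2_slash0, poly2_slash1, poly2_slash2 in *.
  field. exact Hj.
Qed.

Theorem lemma2p1 :
  forall (Gamma : mat2 -> Prop), fuchsian Gamma ->
  forall (k : Z) (gam : mat2), Gamma gam ->
  forall p0 p1 p2 : C,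
  exists q0 q1 q2 : C,
    forall h : C -> C, holo_H h ->
    forall t : C, inH t ->
      slash_apply k gam (dk_f p0 p1 p2) (dk_g k p0 p1 p2) h t =
      op_apply (dk_f q0 q1 q2) (dk_g k q0 q1 q2) h t.
Proof.
  intros Gamma [[Gamma_SL2 _] _] k gam Hgam p0 p1 p2.
  pose proof (Gamma_SL2 gam Hgam) as Hdet.
  exists (poly2_slash0 gam p0 p1 p2), (poly2_slash1 gam p0 p1 p2),
         (poly2_slash2 gam p0 p1 p2).
  intros h Hh t Ht.
  pose proof (jfac_neq0 gam t Hdet Ht) as Hj.
  destruct (Hh t Ht) as [l Hl].
  rewrite (slash_apply_first_order k gam _ _ h t l Hj Hl).
  unfold op_apply, dk_f, dk_g.
  rewrite <- (poly2_slash gam p0 p1 p2 t Hj), <- (poly2'_slash gam p0 p1 p2 t Hdet Hj).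
  ring.
Qed.
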